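(* For every object $V$ of $\mathcal{E}_q^{deg}$ there is an isomorphism in $\mathcal{F}_{iso}$ $$Q_V\cong\bigoplus_{A\in\mathcal{S}_V}iso_A,$$ where $\mathcal{S}_V$ is the set of subobjects $\alpha:A\hookrightarrow V$ of $V$ in $\mathcal{E}_q^{deg}$ (equivalently, the linear subspaces $A$ of $V$ with the restricted form, $V$ itself included).
   Context: $\mathcal{E}$: all $\mathbb{F}_2$-vector spaces; $(-)^*$ linear duality. $\mathcal{E}_q^{deg}$: objects finite-dimensional quadratic spaces over $\mathbb{F}_2$ (possibly degenerate), morphisms injective linear maps preserving quadratic forms. $\mathrm{Sp}(\mathcal{E}_q^{deg})$: same objects, morphisms spans $[V\leftarrow D\rightarrow W]$ up to iso of $D$, composed by pullback. $\mathcal{F}_{iso}=\mathrm{Func}(\mathrm{Sp}(\mathcal{E}_q^{deg}),\mathcal{E})$. $Q_V=\mathbb{F}_2[\mathrm{Hom}_{\mathrm{Sp}(\mathcal{E}_q^{deg})}(V,-)]$. Duality: $DF=(-)^*\circ F\circ tr^{op}$ with $tr[V\leftarrow X\rightarrow W]=[W\leftarrow X\rightarrow V]$. $a_V:Q_V\to DQ_V$ is the morphism corresponding by Yoneda to the linear form $(\mathrm{Id}_V)^*\in\mathbb{F}_2[\mathrm{End}(V)]^*$ taking value $1$ on $\mathrm{Id}_V$ and $0$ on all other basis elements; the isotropic functor $iso_V$ is the image of $a_V$. *)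

From HB Require Import structures.
From mathcomp Require Import all_boot all_order all_algebra.
Set Implicit Arguments. Unset Strict Implicit. Unset Printing Implicit Defensive.
Import GRing.Theory.
Local Open Scope ring_scope.



(* A finite set of row vectors which is an F_2-linear subspace
   (over F_2, closure under 0 and + is closure under linear combinations). *)
Definition is_subspace n (U : {set 'rV['F_2]_n}) : bool :=
  (0 \in U) && [forall x in U, forall y in U, x + y \in U].

Definition polar n (q : 'rV['F_2]_n -> 'F_2) (x y : 'rV['F_2]_n) : 'F_2 :=
  q (x + y) - q x - q y.

(* q is a quadratic form on U: q(0) = 0 (i.e. q(c x) = c^2 q(x) for c in F_2)
   and its polar form is bilinear on U (it is symmetric by definition,
   and additivity is F_2-linearity). *)
Definition is_quadratic n (U : {set 'rV['F_2]_n}) (q : 'rV['F_2]_n -> 'F_2) : bool :=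
  (q 0 == 0) && [forall x in U, forall y in U, forall z in U,
     polar q (x + y) z == polar q x z + polar q y z].

(* An object of E_q^deg: a finite-dimensional F_2-vector space (realised as a
   subspace U of some F_2^n) with a (possibly degenerate) quadratic form. *)
Record qobj := QObj {
  qdim : nat;
  qspace : {set 'rV['F_2]_qdim};
  qform : 'rV['F_2]_qdim -> 'F_2;
  qspaceP : is_subspace qspace;
  qformP : is_quadratic qspace qform }.

Definition rel_ty (V W : qobj) := {set ('rV['F_2]_(qdim V) * 'rV['F_2]_(qdim W))}.

(* A span [V <- D -> W] (legs injective, form preserving) up to isomorphism of D
   is the same thing as the image of D in V x W: a subspace S of V x W on which
   both projections are injective and q_V(s.1) = q_W(s.2). *)
Definition is_span (V W : qobj) (S : rel_ty V W) : bool :=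
  [&& S \subset setX (qspace V) (qspace W),
      (0, 0) \in S,
      [forall x in S, forall y in S, (x.1 + y.1, x.2 + y.2) \in S],
      [forall x in S, forall y in S, (x.1 == y.1) ==> (x == y)],
      [forall x in S, forall y in S, (x.2 == y.2) ==> (x == y)] &
      [forall x in S, @qform V x.1 == @qform W x.2]].

Definition sphom (V W : qobj) := {S : rel_ty V W | is_span S}.

(* Composition by pullback = composition of relations: (F o G) for G : U -> V,
   F : V -> W. *)
Definition relcomp (U V W : qobj) (G : rel_ty U V) (F : rel_ty V W) : rel_ty U W :=
  [set x | [exists w, ((x.1, w) \in G) && ((w, x.2) \in F)]].

Definition reltr (V W : qobj) (F : rel_ty V W) : rel_ty W V :=
  [set (x.2, x.1) | x in F].

Definition relid (V : qobj) : rel_ty V V := [set (x, x) | x in qspace V].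

(* Q_V(W) = F_2[Hom(V,W)], as functions Hom(V,W) -> F_2 (Hom(V,W) is finite). *)
Notation Qmod V W := {ffun sphom V W -> 'F_2}.

(* Q_V(f) for f : W -> W' : basis element g |-> f o g, extended linearly. *)
Definition Qmap (V W W' : qobj) (F : rel_ty W W') (x : Qmod V W) : Qmod V W' :=
  [ffun h : sphom V W' => \sum_(g : sphom V W | relcomp (val g) F == val h) x g].

Definition delta (V W : qobj) (h : sphom V W) : Qmod V W := [ffun g => (g == h)%:R].

(* DQ_V(W) = Q_V(W)^*, identified with functions Hom(V,W) -> F_2 via the
   dual basis; DQ_V(f) = (Q_V(tr f))^*. *)
Definition DQmap (V W W' : qobj) (F : rel_ty W W') (l : Qmod V W) : Qmod V W' :=
  [ffun h : sphom V W' => \sum_(g : sphom V W) Qmap (reltr F) (delta h) g * l g].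

Definition fscale (T : finType) (c : 'F_2) (f : {ffun T -> 'F_2}) : {ffun T -> 'F_2} :=
  [ffun t => c * f t].

Definition idstar (V : qobj) : Qmod V V := [ffun h : sphom V V => (val h == relid V)%:R].

(* a_V : Q_V -> DQ_V, the Yoneda morphism of (Id_V)^*: [g] |-> DQ_V(g)((Id_V)^* ). *)
Definition amap (V W : qobj) (x : Qmod V W) : Qmod V W :=
  \sum_(g : sphom V W) fscale (x g) (DQmap (val g) (idstar V)).

Definition in_iso (V W : qobj) (l : Qmod V W) : Prop := exists x : Qmod V W, amap x = l.

Definition subobj (V : qobj) :=
  {A : {set 'rV['F_2]_(qdim V)} | is_subspace A && (A \subset qspace V)}.

Lemma is_quadratic_sub n (U A : {set 'rV['F_2]_n}) q :
  A \subset U -> is_quadratic U q -> is_quadratic A q.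
Proof.
move=> /subsetP sAU /andP[q0 /forallP H]; rewrite /is_quadratic q0 /=.
apply/forallP=> x; apply/implyP=> xA; apply/forallP=> y; apply/implyP=> yA.
apply/forallP=> z; apply/implyP=> zA.
have := H x; rewrite (sAU _ xA) /= => /forallP /(_ y); rewrite (sAU _ yA) /=.
by move=> /forallP /(_ z); rewrite (sAU _ zA).
Qed.

Lemma subobj_subspace V (A : subobj V) : is_subspace (val A).
Proof. by case/andP: (valP A). Qed.

Lemma subobj_quad V (A : subobj V) : is_quadratic (val A) (@qform V).
Proof. by case/andP: (valP A) => _ sA; exact: is_quadratic_sub sA (@qformP V). Qed.

Definition sobj (V : qobj) (A : subobj V) : qobj :=
  QObj (subobj_subspace A) (subobj_quad A).

From HB Require Import structures.
From mathcomp Require Import all_boot all_order all_algebra.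
Import GRing.Theory.
Local Open Scope ring_scope.

(* Unfolding the Yoneda construction, a_V sends a basis span [g] to its dual basis
   vector when g is total (its leg to V is an isomorphism) and to 0 otherwise, so
   iso_V(W) consists of the functions on Hom(V, W) supported on total spans.  A span g
   from V is the same thing as the subobject A = dom g of V together with g viewed as a
   total span from A.  The A-component of the isomorphism sends x in Q_V(W) to the
   function k |-> sum of x(g) over the spans g from V restricting to k, for total k
   from A.  Naturality is an adjunction between composing with f and with its
   transpose, and bijectivity holds because x |-> (sum_{g >= h} x(g))_h is
   unitriangular for the inclusion order on spans. *)

Section UpperSums.

Variables (I : finType) (R : rel I) (m : I -> nat).
Hypothesis R_refl : reflexive R.
Hypothesis R_eq : forall i j, R i j -> (m j <= m i)%N -> i = j.

Definition upsum {M : zmodType} (x : {ffun I -> M}) : {ffun I -> M} :=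
  [ffun i => \sum_(j | R i j) x j].

Lemma upsum_eq0 (M : zmodType) (x : {ffun I -> M}) : upsum x = 0 -> x = 0.
Proof.
move=> x_up0; apply/ffunP => i; rewrite ffunE; apply/eqP/contraT => xi_neq0.
(* a nonzero coordinate of maximal measure would be the only one in its upper sum *)
have [k xk_neq0 k_max] := @arg_maxnP _ i (fun j => x j != 0) m xi_neq0.
move/ffunP/(_ k): x_up0; rewrite !ffunE (bigD1 k) //= big1 ?addr0.
  by move/eqP; rewrite (negbTE xk_neq0).
move=> j /andP[Rkj j_neq_k]; apply/eqP/contraT => xj_neq0.
by move: j_neq_k; rewrite (R_eq _ _ Rkj (k_max j xj_neq0)) eqxx.
Qed.

Lemma upsum_inj (M : zmodType) : injective (@upsum M).
Proof.
move=> x y exy; apply/eqP; rewrite -subr_eq0; apply/eqP/upsum_eq0.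
apply/ffunP => i; move/ffunP/(_ i): exy; rewrite !ffunE => exy.
have -> : \sum_(j | R i j) (x - y) j = \sum_(j | R i j) x j - \sum_(j | R i j) y j.
  by rewrite -sumrB; apply: eq_bigr => j _; rewrite !ffunE.
by rewrite exy subrr.
Qed.

Lemma upsum_bij (M : finZmodType) : bijective (@upsum M).
Proof. exact/injF_bij/upsum_inj. Qed.

End UpperSums.

Arguments upsum {I} R {M} x.
Arguments upsum_inj {I R m} R_refl R_eq {M}.
Arguments upsum_bij {I R m} R_refl R_eq M.

Lemma sum_if (R : nmodType) (I : finType) (b : bool) (P : pred I) (F : I -> R) :
  (if b then \sum_(i | P i) F i else 0) = \sum_(i | b && P i) F i.
Proof. by case: b; rewrite // big_pred0. Qed.

Definition rcomp {T1 T2 T3 : finType} (G : {set T1 * T2}) (F : {set T2 * T3}) :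
    {set T1 * T3} :=
  [set x | [exists w, ((x.1, w) \in G) && ((w, x.2) \in F)]].
Definition rtr {T1 T2 : finType} (F : {set T1 * T2}) : {set T2 * T1} :=
  [set (x.2, x.1) | x in F].
Definition domset {T1 T2 : finType} (S : {set T1 * T2}) : {set T1} :=
  [set x.1 | x in S].
Definition functional_rel {T1 T2 : finType} (S : {set T1 * T2}) : Prop :=
  forall a b c, (a, b) \in S -> (a, c) \in S -> b = c.
Definition injective_rel {T1 T2 : finType} (S : {set T1 * T2}) : Prop :=
  forall a b c, (a, c) \in S -> (b, c) \in S -> a = b.

Lemma in_rcomp {T1 T2 T3 : finType} (G : {set T1 * T2}) (F : {set T2 * T3}) a c :
  ((a, c) \in rcomp G F) = [exists b, ((a, b) \in G) && ((b, c) \in F)].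
Proof. by rewrite inE. Qed.

Lemma in_rtr {T1 T2 : finType} (G : {set T1 * T2}) a b : ((b, a) \in rtr G) = ((a, b) \in G).
Proof.
by apply/imsetP/idP => [[[x y] xyG [-> ->]] // | abG]; exists (a, b).
Qed.

Lemma in_domset {T1 T2 : finType} (G : {set T1 * T2}) a :
  (a \in domset G) = [exists b, (a, b) \in G].
Proof.
by apply/imsetP/existsP => [[[x y] xyG ->] | [b abG]]; [exists y | exists (a, b)].
Qed.

Lemma in_diag {T : finType} (U : {set T}) a b :
  ((a, b) \in [set (x, x) | x in U]) = (a == b) && (a \in U).
Proof.
apply/imsetP/andP => [[x xU [-> ->]] | [/eqP -> bU]]; last by exists b.
by rewrite eqxx.
Qed.

Lemma mem_domset {T1 T2 : finType} {G : {set T1 * T2}} {a b} : (a, b) \in G -> a \in domset G.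
Proof. by move=> abG; rewrite in_domset; apply/existsP; exists b. Qed.

Lemma rcomp_rtr_diag {T1 T2 : finType} (U : {set T1}) (H G : {set T1 * T2}) :
    domset H \subset U -> domset G \subset U ->
    functional_rel H -> functional_rel G -> injective_rel G ->
  (rcomp H (rtr G) == [set (x, x) | x in U]) = (H == G) && (domset G == U).
Proof.
move=> /subsetP sHU /subsetP sGU funH funG injG.
apply/eqP/andP => [HG_id | [/eqP -> /eqP <-]].
  have common a : a \in U -> exists2 b, (a, b) \in H & (a, b) \in G.
    move=> aU; move: (in_diag U a a); rewrite eqxx aU -HG_id in_rcomp.
    by case/existsP => b /andP[abH]; rewrite in_rtr; exists b.
  split; apply/eqP/setP; last first.
    by move=> a; apply/idP/idP => [/sGU // | /common[b _ /mem_domset]].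
  move=> [a b]; apply/idP/idP => abS.
    have [b' ab'H ab'G] := common a (sHU _ (mem_domset abS)).
    by rewrite (funH _ _ _ abS ab'H).
  have [b' ab'H ab'G] := common a (sGU _ (mem_domset abS)).
  by rewrite (funG _ _ _ abS ab'G).
apply/setP => -[a c]; rewrite in_rcomp in_diag.
apply/existsP/andP => [[b /andP[abG]] | [/eqP <- aG]].
  by rewrite in_rtr => cbG; rewrite (injG _ _ _ abG cbG) eqxx (mem_domset cbG).
by move: aG; rewrite in_domset => /existsP[b abG]; exists b; rewrite abG in_rtr.
Qed.

Section RcompRtr.

Variables (T1 T2 T3 : finType) (K : {set T1 * T3}) (F : {set T2 * T3}).
Variable G : {set T1 * T2}.

Lemma domset_rcomp_sub : domset (rcomp K (rtr F)) \subset domset K.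
Proof.
apply/subsetP => a; rewrite in_domset => /existsP[b].
by rewrite in_rcomp => /existsP[c /andP[/mem_domset]].
Qed.

Lemma domset_rcomp_rtr : K \subset rcomp G F -> domset (rcomp K (rtr F)) = domset K.
Proof.
move=> /subsetP sKGF; apply/eqP; rewrite eqEsubset domset_rcomp_sub /=.
apply/subsetP => a; rewrite in_domset => /existsP[c acK].
move: (sKGF _ acK); rewrite in_rcomp => /existsP[b /andP[_ bcF]].
by apply/(@mem_domset _ _ _ a b); rewrite in_rcomp; apply/existsP; exists c; rewrite acK in_rtr.
Qed.

Lemma rcomp_rtr_sub : injective_rel F -> K \subset rcomp G F -> rcomp K (rtr F) \subset G.
Proof.
move=> injF /subsetP sKGF; apply/subsetP => -[a b].
rewrite in_rcomp => /existsP[c /andP[acK]]; rewrite in_rtr => bcF.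
move: (sKGF _ acK); rewrite in_rcomp => /existsP[b' /andP[ab'G b'cF]].
by rewrite (injF _ _ _ bcF b'cF).
Qed.

Lemma sub_rcomp_rtr : functional_rel K -> domset K \subset domset (rcomp K (rtr F)) ->
  rcomp K (rtr F) \subset G -> K \subset rcomp G F.
Proof.
move=> funK /subsetP sK /subsetP sKFG; apply/subsetP => -[a c] acK.
move: (sK _ (mem_domset acK)); rewrite in_domset => /existsP[b].
rewrite in_rcomp => /existsP[c' /andP[ac'K]]; rewrite in_rtr => bc'F.
rewrite (funK _ _ _ acK ac'K) in_rcomp; apply/existsP; exists b; rewrite bc'F andbT.
by apply: sKFG; rewrite in_rcomp; apply/existsP; exists c'; rewrite ac'K in_rtr.
Qed.

Lemma total_sub_rcomp_rtr (A : {set T1}) :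
    domset K \subset A -> functional_rel K -> injective_rel F ->
  (domset K == A) && (K \subset rcomp G F)
    = (domset (rcomp K (rtr F)) == A) && (rcomp K (rtr F) \subset G).
Proof.
move=> sKA funK injF; apply/andP/andP => [[/eqP dK sKGF] | [/eqP dKF sKFG]].
  by rewrite domset_rcomp_rtr // dK rcomp_rtr_sub.
have dK : domset K = A by apply/eqP; rewrite eqEsubset sKA -dKF domset_rcomp_sub.
by rewrite dK eqxx; split=> //; apply: sub_rcomp_rtr; rewrite // dK dKF.
Qed.

End RcompRtr.

Record span_spec {V W : qobj} (S : rel_ty V W) : Prop := SpanSpec {
  span_sub : S \subset setX (qspace V) (qspace W);
  span0 : (0, 0) \in S;
  spanD : forall a b c d, (a, b) \in S -> (c, d) \in S -> (a + c, b + d) \in S;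
  span_functional : functional_rel S;
  span_injective : injective_rel S;
  span_form : forall a b, (a, b) \in S -> @qform V a = @qform W b }.

Lemma spanP (V W : qobj) (S : rel_ty V W) : reflect (span_spec S) (is_span S).
Proof.
apply: (iffP and5P) => [[sub S0 /forall_inP SD /forall_inP funS /andP[]] | []].
  move=> /forall_inP injS /forall_inP formS; split=> //.
  - by move=> a b c d abS cdS; move/forall_inP: (SD _ abS) => /(_ _ cdS).
  - move=> a b c abS acS; move/forall_inP: (funS _ abS) => /(_ _ acS).
    by move=> /implyP/(_ (eqxx a))/eqP[].
  - move=> a b c acS bcS; move/forall_inP: (injS _ acS) => /(_ _ bcS).
    by move=> /implyP/(_ (eqxx c))/eqP[].
  - by move=> a b /formS/eqP.
move=> sub S0 SD funS injS formS; split=> //; last (apply/andP; split).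
- by apply/forall_inP => -[a b] abS; apply/forall_inP => -[c d]; apply: SD.
- apply/forall_inP => -[a b] abS; apply/forall_inP => -[c d] cdS; apply/implyP => /eqP /= ac.
  by rewrite ac in abS *; rewrite (funS _ _ _ abS cdS).
- apply/forall_inP => -[a b] abS; apply/forall_inP => -[c d] cdS; apply/implyP => /eqP /= bd.
  by rewrite bd in abS *; rewrite (injS _ _ _ abS cdS).
- by apply/forall_inP => -[a b] /formS ->.
Qed.

Lemma sphomP {V W : qobj} (g : sphom V W) : span_spec (val g).
Proof. exact/spanP/valP. Qed.

Lemma span_dom {V W : qobj} {S : rel_ty V W} :
  span_spec S -> domset S \subset qspace V.
Proof.
move=> /span_sub /subsetP sub; apply/subsetP => a; rewrite in_domset => /existsP[b].
by move=> /sub; rewrite inE => /andP[].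
Qed.

Lemma span_comp {U V W : qobj} {G : rel_ty U V} {F : rel_ty V W} :
  is_span G -> is_span F -> is_span (relcomp G F).
Proof.
move=> /spanP[/subsetP Gsub G0 GD Gfun Ginj Gform].
move=> /spanP[/subsetP Fsub F0 FD Ffun Finj Fform].
change (is_span (rcomp G F)); apply/spanP; split.
- apply/subsetP => -[a c]; rewrite in_rcomp => /existsP[b /andP[/Gsub abG /Fsub bcF]].
  by move: abG bcF; rewrite !inE => /andP[-> _] /andP[_ ->].
- by rewrite in_rcomp; apply/existsP; exists 0; rewrite G0 F0.
- move=> a c a' c'; rewrite !in_rcomp => /existsP[b /andP[abG bcF]].
  case/existsP=> b' /andP[abG' bcF'].
  by apply/existsP; exists (b + b'); rewrite GD ?FD.
- move=> a c c'; rewrite !in_rcomp => /existsP[b /andP[abG bcF]].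
  case/existsP=> b' /andP[abG' bcF'].
  by move: bcF; rewrite (Gfun _ _ _ abG abG') => /Ffun; apply.
- move=> a a' c; rewrite !in_rcomp => /existsP[b /andP[abG bcF]].
  case/existsP=> b' /andP[abG' bcF'].
  by move: abG; rewrite (Finj _ _ _ bcF bcF') => /Ginj; apply.
- move=> a c; rewrite in_rcomp => /existsP[b /andP[abG bcF]].
  by rewrite (Gform _ _ abG) (Fform _ _ bcF).
Qed.

Lemma span_tr {V W : qobj} {F : rel_ty V W} : is_span F -> is_span (reltr F).
Proof.
move=> /spanP[/subsetP Fsub F0 FD Ffun Finj Fform].
change (is_span (rtr F)); apply/spanP; split.
- by apply/subsetP => -[b a]; rewrite in_rtr => /Fsub; rewrite !inE andbC.
- by rewrite in_rtr.
- by move=> b a b' a'; rewrite !in_rtr; apply: FD.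
- by move=> b a a'; rewrite !in_rtr; apply: Finj.
- by move=> b b' a; rewrite !in_rtr; apply: Ffun.
- by move=> b a; rewrite in_rtr => /Fform ->.
Qed.

Definition spcomp {U V W : qobj} (g : sphom U V) (f : sphom V W) : sphom U W :=
  exist _ (relcomp (val g) (val f)) (span_comp (valP g) (valP f)).

Definition sptr {V W : qobj} (f : sphom V W) : sphom W V :=
  exist _ (reltr (val f)) (span_tr (valP f)).

Lemma QmapE (U W W' : qobj) (f : sphom W W') (x : Qmod U W) (h : sphom U W') :
  Qmap (val f) x h = \sum_(g | spcomp g f == h) x g.
Proof. by rewrite ffunE. Qed.

Lemma Qmap_delta {U W W' : qobj} (f : sphom W W') (h : sphom U W) :
  Qmap (val f) (delta h) = delta (spcomp h f).
Proof.
apply/ffunP => g; rewrite QmapE big_mkcond (bigD1 h) //= big1 => [|g' /negbTE ng'h].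
  by rewrite !ffunE eqxx addr0 eq_sym; case: (g == _).
by rewrite ffunE ng'h; case: ifP.
Qed.

Lemma DQmapE (U W W' : qobj) (f : sphom W W') (l : Qmod U W) (h : sphom U W') :
  DQmap (val f) l h = l (spcomp h (sptr f)).
Proof.
rewrite ffunE (bigD1 (spcomp h (sptr f))) //= big1 => [|g /negbTE ng].
  by rewrite (Qmap_delta (sptr f)) ffunE eqxx mul1r addr0.
by rewrite (Qmap_delta (sptr f)) ffunE ng mul0r.
Qed.

(* A span is total when its leg to the source is an isomorphism. *)
Definition is_total {U W : qobj} (h : sphom U W) : bool := domset (val h) == qspace U.

Lemma amapE (U W : qobj) (y : Qmod U W) (h : sphom U W) :
  amap y h = if is_total h then y h else 0.
Proof.
have idE g : (val (spcomp h (sptr g)) == relid U) = (h == g) && is_total g.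
  have [_ _ _ Hfun _ _] := sphomP h; have [_ _ _ Gfun Ginj _] := sphomP g.
  rewrite -[h == g]val_eqE.
  exact: rcomp_rtr_diag (span_dom (sphomP h)) (span_dom (sphomP g)) Hfun Gfun Ginj.
rewrite /amap sum_ffunE (bigD1 h) //= big1 => [|g hg].
  by rewrite ffunE DQmapE ffunE idE eqxx addr0; case: is_total; rewrite ?mulr1 ?mulr0.
by rewrite ffunE DQmapE ffunE idE eq_sym (negbTE hg) mulr0.
Qed.

Lemma in_isoP {U W : qobj} (l : Qmod U W) :
  in_iso l <-> forall h, ~~ is_total h -> l h = 0.
Proof.
split=> [[y <-] h /negbTE nh | l0]; first by rewrite amapE nh.
by exists l; apply/ffunP => h; rewrite amapE; case: ifPn => // /l0.
Qed.

Definition span_le {V W : qobj} : rel (sphom V W) := fun g g' => val g \subset val g'.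

Lemma span_le_refl (V W : qobj) : reflexive (@span_le V W).
Proof. by move=> g; apply: subxx. Qed.

Lemma span_le_card (V W : qobj) (g g' : sphom V W) :
  span_le g g' -> (#|val g'| <= #|val g|)%N -> g = g'.
Proof. by move=> le_gg' le_card; apply/val_inj/eqP; rewrite eqEcard le_card andbT. Qed.

Lemma dom_subobj_spec {V W : qobj} (g : sphom V W) :
  is_subspace (domset (val g)) && (domset (val g) \subset qspace V).
Proof.
have [_ g0 gD _ _ _] := sphomP g; rewrite (span_dom (sphomP g)) andbT.
apply/andP; split; first exact: mem_domset g0.
apply/forall_inP => a; rewrite in_domset => /existsP[b abg].
apply/forall_inP => c; rewrite in_domset => /existsP[d cdg].
exact: mem_domset (gD _ _ _ _ abg cdg).
Qed.

Definition dom_subobj {V W : qobj} (g : sphom V W) : subobj V :=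
  exist _ (domset (val g)) (dom_subobj_spec g).

Lemma restr_span_spec {V W : qobj} (g : sphom V W) :
  @is_span (sobj (dom_subobj g)) W (val g).
Proof.
have [/subsetP gsub g0 gD gfun ginj gform] := sphomP g.
apply/spanP; split=> //; apply/subsetP => -[a b] abg.
by move: (gsub _ abg); rewrite !inE /= => /andP[_ ->]; rewrite andbT (mem_domset abg).
Qed.

Definition restr_span {V W : qobj} (g : sphom V W) : sphom (sobj (dom_subobj g)) W :=
  exist _ (val g) (restr_span_spec g).

Lemma ext_span_spec {V W : qobj} {A : subobj V} (k : sphom (sobj A) W) :
  @is_span V W (val k).
Proof.
have [/subsetP ksub k0 kD kfun kinj kform] := sphomP k.
have /subsetP sAV : val A \subset qspace V by case/andP: (valP A).
apply/spanP; split=> //; apply/subsetP => -[a b] /ksub.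
by rewrite !inE => /andP[/sAV -> ->].
Qed.

Definition ext_span {V W : qobj} {A : subobj V} (k : sphom (sobj A) W) : sphom V W :=
  exist _ (val k) (ext_span_spec k).

Lemma restr_span_total (V W : qobj) (g : sphom V W) : is_total (restr_span g).
Proof. exact: eqxx. Qed.

Lemma ext_restr_span (V W : qobj) (g : sphom V W) : ext_span (restr_span g) = g.
Proof. exact: val_inj. Qed.

Lemma subobj_family_congr (V W : qobj) (psi : forall A : subobj V, Qmod (sobj A) W)
    (A B : subobj V) (k : sphom (sobj A) W) (k' : sphom (sobj B) W) :
  val A = val B -> val k = val k' -> psi A k = psi B k'.
Proof. by move=> /val_inj eAB; subst B => /val_inj ->. Qed.

Lemma restr_ext_span (V W : qobj) (psi : forall A : subobj V, Qmod (sobj A) W)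
    (A : subobj V) (k : sphom (sobj A) W) :
  is_total k -> psi (dom_subobj (ext_span k)) (restr_span (ext_span k)) = psi A k.
Proof. by move=> /eqP tk; apply: subobj_family_congr. Qed.

Definition iso_comp {V : qobj} (A : subobj V) (W : qobj) (x : Qmod V W) : Qmod (sobj A) W :=
  [ffun k => if is_total k then upsum span_le x (ext_span k) else 0].

Lemma iso_comp_linear (V : qobj) (A : subobj V) (W : qobj) (c : 'F_2) (x y : Qmod V W) :
  iso_comp A W (fscale c x + y) = fscale c (iso_comp A W x) + iso_comp A W y.
Proof.
apply/ffunP => k; rewrite !ffunE; case: is_total; last by rewrite mulr0 addr0.
by rewrite mulr_sumr -big_split; apply: eq_bigr => g _; rewrite !ffunE.
Qed.

Lemma iso_comp_iso (V : qobj) (A : subobj V) (W : qobj) (x : Qmod V W) :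
  in_iso (iso_comp A W x).
Proof. by apply/in_isoP => k /negbTE nk; rewrite ffunE nk. Qed.

Lemma iso_comp_restr (V W : qobj) (x : Qmod V W) (g : sphom V W) :
  iso_comp (dom_subobj g) W x (restr_span g) = upsum span_le x g.
Proof. by rewrite ffunE restr_span_total ext_restr_span. Qed.

Lemma upsum_Qmap (V W W' : qobj) (f : sphom W W') (x : Qmod V W) (h : sphom V W') :
  upsum span_le (Qmap (val f) x) h = \sum_(g | span_le h (spcomp g f)) x g.
Proof.
rewrite ffunE (partition_big (spcomp ^~ f) (span_le h)) //=.
apply: eq_bigr => g' hg'; rewrite QmapE; apply: eq_bigl => g.
by case: eqP => [-> | _]; rewrite ?andbT ?andbF.
Qed.

Lemma iso_comp_natural (V : qobj) (A : subobj V) (W W' : qobj) (f : sphom W W')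
    (x : Qmod V W) :
  iso_comp A W' (Qmap (val f) x) = DQmap (val f) (iso_comp A W x).
Proof.
apply/ffunP => k; rewrite DQmapE ffunE [RHS]ffunE upsum_Qmap ffunE !sum_if.
apply: eq_bigl => g; have [_ _ _ kfun _ _] := sphomP k; have [_ _ _ _ finj _] := sphomP f.
exact: total_sub_rcomp_rtr (span_dom (sphomP k)) kfun finj.
Qed.

Theorem theorem4p31 (V : qobj) :
  exists phi : forall (A : subobj V) (W : qobj), Qmod V W -> Qmod (sobj A) W,
    [/\ forall A W (c : 'F_2) (x y : Qmod V W),
          phi A W (fscale c x + y) = fscale c (phi A W x) + phi A W y,
        forall A W (x : Qmod V W), in_iso (phi A W x),
        forall A W W' (f : sphom W W') (x : Qmod V W),
          phi A W' (Qmap (val f) x) = DQmap (val f) (phi A W x),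
        forall W (x y : Qmod V W), (forall A, phi A W x = phi A W y) -> x = y &
        forall W (psi : forall A : subobj V, Qmod (sobj A) W),
          (forall A, in_iso (psi A)) -> exists x : Qmod V W, forall A, phi A W x = psi A].
Proof.
exists (@iso_comp V); split.
- exact: iso_comp_linear.
- exact: iso_comp_iso.
- exact: iso_comp_natural.
- move=> W x y eq_xy; apply: (upsum_inj (@span_le_refl V W) (@span_le_card V W)).
  by apply/ffunP => g; rewrite -!iso_comp_restr eq_xy.
move=> W psi psi_iso.
have [upsum_inv _ upsum_invK] := upsum_bij (@span_le_refl V W) (@span_le_card V W) 'F_2.
exists (upsum_inv [ffun g => psi (dom_subobj g) (restr_span g)]) => A.
apply/ffunP => k; rewrite ffunE; case: ifPn => [tk | nk].
  by rewrite upsum_invK ffunE restr_ext_span.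
by rewrite ((in_isoP (psi A)).1 (psi_iso A) k nk).
Qed.
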